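(* The logarithmic partial negativity $\hat N_l(\rho)=\log_2[\hat N(\rho)+1]$ is not monogamous: for the state $|\widetilde\Omega\rangle^{ABC}=\lambda_0|0\rangle|00\rangle+\lambda_1|1\rangle|10\rangle+\lambda_2|2\rangle|11\rangle$ with $\lambda_0\ge\lambda_1\ge\lambda_2>0$, $\sum\lambda_i^2=1$, one has $\hat N_l(|\widetilde\Omega\rangle^{A|BC})=\hat N_l(\rho^{AB})=\log_2(1+\lambda_0\lambda_1)$ while $\hat N_l(\rho^{AC})=\log_2(1+\lambda_1\lambda_2)>0$.
   Context: $\hat N(\rho)$ is the operator norm of the negative part of the partial transpose $\rho^{T_A}$ (the absolute value of its most negative eigenvalue, or $0$ if $\rho^{T_A}\ge0$). For a tripartite state, $E(A|BC)$ is the measure across the cut $A$ versus $BC$; $\rho^{AB},\rho^{AC}$ are reduced states. A measure $E$ is monogamous if $E(A|BC)=E(AB)$ always implies $E(AC)=0$. *)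

From HB Require Import structures.
From mathcomp Require Import all_boot all_order all_algebra.
From mathcomp Require Import complex.
From mathcomp Require Import reals exp.

Set Implicit Arguments.
Unset Strict Implicit.
Unset Printing Implicit Defensive.

Import Order.TTheory GRing.Theory Num.Theory.
Local Open Scope ring_scope.
Local Open Scope complex_scope.

Section Defs.
Variable R : realType.
Local Notation C := (R[i]).

(* an operator on the finite-dimensional Hilbert space C^T, as a kernel T x T -> C *)
Definition op (T : finType) := T -> T -> C.

Definition mx_of (T : finType) (rho : op T) : 'M[C]_#|T| :=
  \matrix_(i, j) rho (enum_val i) (enum_val j).

(* the eigenvalues (with multiplicity) of a square complex matrix:
   the roots of its characteristic polynomial *)
Definition spectrum n (M : 'M[C]_n) : seq C :=
  sval (closed_field_poly_normal (char_poly M)).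

Definition ptA (TA TB : finType) (rho : op (TA * TB)%type) : op (TA * TB)%type :=
  fun x y => rho (y.1, x.2) (x.1, y.2).

(* \hat N(rho): absolute value of the most negative eigenvalue of rho^{T_A},
   or 0 if rho^{T_A} >= 0.  (Eigenvalues of the Hermitian matrix rho^{T_A}
   are real; Re is only used to land in R.) *)
Definition Nhat (TA TB : finType) (rho : op (TA * TB)%type) : R :=
  \big[Num.max/0]_(a <- spectrum (mx_of (ptA rho))) (- complex.Re a).

Definition log2 (x : R) : R := ln x / ln 2.

Definition Nhat_l (TA TB : finType) (rho : op (TA * TB)%type) : R :=
  log2 (Nhat rho + 1).

Definition is_density (T : finType) (rho : op T) : Prop :=
  [/\ forall x y, rho y x = conjc (rho x y),
      forall v : T -> C, 0 <= \sum_x \sum_y conjc (v x) * rho x y * v y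
    & \sum_x rho x x = 1].

Definition pure (T : finType) (psi : T -> C) : op T :=
  fun x y => psi x * conjc (psi y).

Definition trC (TA TB TC : finType) (rho : op (TA * (TB * TC))%type) : op (TA * TB)%type :=
  fun x y => \sum_(c : TC) rho (x.1, (x.2, c)) (y.1, (y.2, c)).

Definition trB (TA TB TC : finType) (rho : op (TA * (TB * TC))%type) : op (TA * TC)%type :=
  fun x y => \sum_(b : TB) rho (x.1, (b, x.2)) (y.1, (b, y.2)).

(* monogamy of a bipartite measure E (the operator on A x (B x C) is
   literally the bipartite state across the cut A|BC) *)
Definition monogamous (E : forall TA TB : finType, op (TA * TB)%type -> R) : Prop :=
  forall (TA TB TC : finType) (rho : op (TA * (TB * TC))%type),
    is_density rho -> E _ _ rho = E _ _ (trC rho) -> E _ _ (trB rho) = 0.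

Definition Omega (l0 l1 l2 : R) : ('I_3 * ('I_2 * 'I_2))%type -> C :=
  fun x =>
    let: (a, (b, c)) := x in
    if [&& val a == 0%N, val b == 0%N & val c == 0%N] then l0%:C
    else if [&& val a == 1%N, val b == 1%N & val c == 0%N] then l1%:C
    else if [&& val a == 2%N, val b == 1%N & val c == 1%N] then l2%:C
    else 0.

End Defs.

(* For each of the three partial transposes, [Nhat] is pinned down from both
   sides: an explicit antisymmetric vector such as |01> - |10> is an
   eigenvector with eigenvalue -m, and the Hermitian form of rho^{T_A} + m I
   is an explicit nonnegative combination of squared moduli, so no eigenvalue
   lies below -m. *)

From HB Require Import structures.
From mathcomp Require Import all_boot all_order all_algebra.
From mathcomp Require Import complex.
From mathcomp Require Import reals exp.
From mathcomp Require Import ring lra.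

Import Order.TTheory GRing.Theory Num.Theory.
Local Open Scope ring_scope.

Section Negativity.
Set Implicit Arguments.
Unset Strict Implicit.
Local Open Scope complex_scope.
Variable R : realType.
Local Notation C := (R[i]).

Definition qform (T : finType) (A : op R T) (u : T -> C) : C :=
  \sum_x \sum_y conjc (u x) * A x y * u y.

Definition sqnorm (T : finType) (u : T -> C) : C := \sum_x conjc (u x) * u x.

Lemma mem_spectrum n (M : 'M[C]_n) z : (z \in spectrum M) = eigenvalue M z.
Proof.
rewrite eigenvalue_root_char /spectrum; case: closed_field_poly_normal => r /= E.
by rewrite [in RHS]E (monicP (char_poly_monic M)) scale1r root_prod_XsubC.
Qed.

Lemma sum_enum_val (T : finType) (F : T -> C) :
  \sum_(i < #|T|) F (enum_val i) = \sum_x F x.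
Proof. by rewrite -big_enum_val; apply: eq_bigl => x; rewrite inE. Qed.

Lemma sqnormc_ge0 (z : C) : 0 <= conjc z * z.
Proof. by rewrite mulrC mulcJ_ge0. Qed.

Lemma sqnorm_gt0 (T : finType) (u : T -> C) x : u x != 0 -> 0 < sqnorm u.
Proof.
move=> ux0; rewrite lt_def sumr_ge0 ?andbT => [|y _]; last exact: sqnormc_ge0.
apply: contra ux0 => /eqP/psumr_eq0P/(_ x isT) ux.
by have /eqP := ux (fun y _ => sqnormc_ge0 _); rewrite mulf_eq0 conjc_eq0 orbb.
Qed.

Lemma eigenvalue_mx_of (T : finType) (A : op R T) (a : C) (w : T -> C) x0 :
  w x0 != 0 -> (forall y, \sum_x w x * A x y = a * w y) ->
  eigenvalue (mx_of A) a.
Proof.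
move=> wx0 w_eig; apply/eigenvalueP; exists (\row_i w (enum_val i)).
  apply/rowP => j; rewrite !mxE.
  under eq_bigr => i _ do rewrite !mxE.
  by rewrite (@sum_enum_val _ (fun x => w x * A x (enum_val j))) w_eig.
by apply/rV0Pn; exists (enum_rank x0); rewrite mxE enum_rankK.
Qed.

(* [mx_of A] acts on row vectors: the ket is the conjugate of an eigenrow. *)
Lemma eigenvalue_qform (T : finType) (A : op R T) (a : C) :
  eigenvalue (mx_of A) a -> exists2 u : T -> C, 0 < sqnorm u & qform A u = a * sqnorm u.
Proof.
case/eigenvalueP => v v_eig /rV0Pn [j vj].
pose u x := conjc (v 0 (enum_rank x)).
exists u; first by apply: (@sqnorm_gt0 _ _ (enum_val j)); rewrite /u enum_valK conjc_eq0.
rewrite /qform exchange_big /sqnorm mulr_sumr; apply: eq_bigr => y _.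
have -> : \sum_x conjc (u x) * A x y * u y = (v *m mx_of A) 0 (enum_rank y) * u y.
  rewrite -mulr_suml mxE -(@sum_enum_val _ (fun x => conjc (u x) * A x y)).
  by congr (_ * _); apply: eq_bigr => i _; rewrite /u conjcK enum_valK mxE enum_rankK.
by rewrite v_eig mxE /u conjcK mulrA.
Qed.

Lemma Nhat_le (TA TB : finType) (P : op R (TA * TB)%type) (m : R) :
  0 <= m -> (forall u, 0 <= qform (ptA P) u + m%:C * sqnorm u) -> Nhat P <= m.
Proof.
move=> m0 shift_ge0; rewrite /Nhat big_seq; apply: bigmax_le => // a.
rewrite mem_spectrum => /eigenvalue_qform [u u0 qform_u].
have := shift_ge0 u; rewrite qform_u -mulrDl (pmulr_lge0 _ u0) lecE => /andP [_].
by case: a {qform_u} => ar ai /= ?; lra.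
Qed.

Lemma Nhat_ge (TA TB : finType) (P : op R (TA * TB)%type) (m : R) :
  eigenvalue (mx_of (ptA P)) (- m%:C) -> m <= Nhat P.
Proof.
rewrite -mem_spectrum /Nhat => m_spec.
by apply: (bigmax_sup_seq _ (- m%:C)) => //=; rewrite opprK.
Qed.

Lemma Nhat_eq (TA TB : finType) (P : op R (TA * TB)%type) (m : R) :
  0 <= m -> eigenvalue (mx_of (ptA P)) (- m%:C) ->
  (forall u, 0 <= qform (ptA P) u + m%:C * sqnorm u) -> Nhat P = m.
Proof. by move=> m0 m_eig shift_ge0; apply/le_anti; rewrite Nhat_le ?Nhat_ge. Qed.

Lemma sum_pair (I J : finType) (F : (I * J)%type -> C) :
  \sum_x F x = \sum_i \sum_j F (i, j).
Proof. by rewrite pair_big; apply: eq_bigr => -[]. Qed.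

Lemma qform_ptA_pure (TA TB : finType) (psi : (TA * TB)%type -> C) u :
  qform (ptA (pure psi)) u =
  \sum_a \sum_a' (\sum_b conjc (u (a, b)) * psi (a', b)) *
                 conjc (\sum_b conjc (u (a', b)) * psi (a, b)).
Proof.
rewrite /qform sum_pair; apply: eq_bigr => a _.
under eq_bigr => b _ do rewrite sum_pair.
rewrite exchange_big; apply: eq_bigr => a' _.
rewrite rmorph_sum mulr_suml; apply: eq_bigr => b _.
rewrite mulr_sumr; apply: eq_bigr => b' _ /=.
rewrite /ptA /pure /= rmorphM /= conjcK; ring.
Qed.

Lemma qform_ptA_trC_pure (TA TB TC : finType) (W : (TA * (TB * TC))%type -> C) u :
  qform (ptA (trC (pure W))) u = \sum_c qform (ptA (pure (fun p => W (p.1, (p.2, c))))) u.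
Proof.
rewrite /qform [RHS]exchange_big; apply: eq_bigr => x _.
rewrite [RHS]exchange_big; apply: eq_bigr => y _.
by rewrite /ptA /trC mulr_sumr mulr_suml.
Qed.

Lemma qform_ptA_trB_pure (TA TB TC : finType) (W : (TA * (TB * TC))%type -> C) u :
  qform (ptA (trB (pure W))) u = \sum_b qform (ptA (pure (fun p => W (p.1, (b, p.2))))) u.
Proof.
rewrite /qform [RHS]exchange_big; apply: eq_bigr => x _.
rewrite [RHS]exchange_big; apply: eq_bigr => y _.
by rewrite /ptA /trB mulr_sumr mulr_suml.
Qed.

Lemma is_density_pure (T : finType) (psi : T -> C) :
  \sum_x psi x * conjc (psi x) = 1 -> is_density (pure psi).
Proof.
move=> psi1; split=> // [x y|v].
  by rewrite /pure rmorphM /= conjcK mulrC.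
have -> : \sum_x \sum_y conjc (v x) * pure psi x y * v y =
          (\sum_x conjc (v x) * psi x) * conjc (\sum_x conjc (v x) * psi x).
  rewrite mulr_suml; apply: eq_bigr => x _.
  rewrite rmorph_sum mulr_sumr; apply: eq_bigr => y _.
  by rewrite /pure rmorphM /= conjcK; ring.
exact: mulcJ_ge0.
Qed.

(* [simpl] computes [conjc x%:C] to this form. *)
Lemma simpl_conjc_real (x : R) : x -i* 0 = x%:C.
Proof. by rewrite oppr0. Qed.

Lemma mulr_real_sqnormc_ge0 (k : R) (z : C) : 0 <= k -> 0 <= k%:C * (conjc z * z).
Proof. by move=> k0; rewrite mulr_ge0 ?sqnormc_ge0 ?ler0c. Qed.

End Negativity.

Ltac expand_finsums :=
  repeat first [rewrite sum_pair | rewrite big_ord_recl | rewrite big_ord0].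

Section Omega.
Local Open Scope complex_scope.
Set Implicit Arguments.
Unset Strict Implicit.
Variables (R : realType) (l0 l1 l2 : R).
Hypotheses (l2_ge0 : 0 <= l2) (l21 : l2 <= l1) (l10 : l1 <= l0).
Local Notation C := (R[i]).
Let l1_ge0 : 0 <= l1 := le_trans l2_ge0 l21.
Let l0_ge0 : 0 <= l0 := le_trans l1_ge0 l10.
Local Notation Om := (Omega l0 l1 l2).

Lemma sqnorm_Omega : l0 ^+ 2 + l1 ^+ 2 + l2 ^+ 2 = 1 ->
  \sum_x Om x * conjc (Om x) = 1.
Proof.
move=> l_norm; expand_finsums.
rewrite /= !(mulr0, mul0r, addr0, add0r, conjc0) !simpl_conjc_real.
have <- : (l0 ^+ 2 + l1 ^+ 2 + l2 ^+ 2)%:C = 1 :> C by rewrite l_norm.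
by rewrite !rmorphD !rmorphXn /=; ring.
Qed.

(* Each [sos] groups the coordinates of [u] along the eigenvectors
   |xy> +- |yx> of rho^{T_A}; the shift by m makes every weight nonnegative. *)
Lemma qform_ptA_trC_Omega_ge (u : ('I_3 * 'I_2)%type -> C) :
  0 <= qform (ptA (trC (pure Om))) u + (l0 * l1)%:C * sqnorm u.
Proof.
rewrite qform_ptA_trC_pure /sqnorm.
under eq_bigr => c _ do rewrite qform_ptA_pure.
expand_finsums.
rewrite /= !(mulr0, mul0r, addr0, add0r, conjc0) !rmorphM /= !conjcK !simpl_conjc_real.
set a00 := u (ord0, ord0). set a01 := u (ord0, lift ord0 ord0).
set a10 := u (lift ord0 ord0, ord0). set a11 := u (lift ord0 ord0, lift ord0 ord0).
set a20 := u (lift ord0 (lift ord0 ord0), ord0).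
set a21 := u (lift ord0 (lift ord0 ord0), lift ord0 ord0).
pose sos := (l0 * l0 + l0 * l1)%:C * (conjc a00 * a00)
   + (l1 * l1 + l0 * l1)%:C * (conjc a11 * a11)
   + (l0 * l1)%:C * (conjc (a01 + a10) * (a01 + a10))
   + (l2 * l2 + l0 * l1)%:C * (conjc a21 * a21)
   + (l0 * l1)%:C * (conjc a20 * a20).
rewrite [leRHS](_ : _ = sos).
  by rewrite !addr_ge0 ?mulr_real_sqnormc_ge0 ?addr_ge0 ?mulr_ge0.
by rewrite /sos !rmorphD !rmorphM /=; ring.
Qed.

Lemma qform_ptA_Omega_ge (u : ('I_3 * ('I_2 * 'I_2))%type -> C) :
  0 <= qform (ptA (pure Om)) u + (l0 * l1)%:C * sqnorm u.
Proof.
rewrite qform_ptA_pure /sqnorm.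
expand_finsums.
rewrite /= !(mulr0, mul0r, addr0, add0r, conjc0) !rmorphM /= !conjcK !simpl_conjc_real.
set a000 := u (ord0, (ord0, ord0)).
set a001 := u (ord0, (ord0, lift ord0 ord0)).
set a010 := u (ord0, (lift ord0 ord0, ord0)).
set a011 := u (ord0, (lift ord0 ord0, lift ord0 ord0)).
set a100 := u (lift ord0 ord0, (ord0, ord0)).
set a101 := u (lift ord0 ord0, (ord0, lift ord0 ord0)).
set a110 := u (lift ord0 ord0, (lift ord0 ord0, ord0)).
set a111 := u (lift ord0 ord0, (lift ord0 ord0, lift ord0 ord0)).
set a200 := u (lift ord0 (lift ord0 ord0), (ord0, ord0)).
set a201 := u (lift ord0 (lift ord0 ord0), (ord0, lift ord0 ord0)).
set a210 := u (lift ord0 (lift ord0 ord0), (lift ord0 ord0, ord0)).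
set a211 := u (lift ord0 (lift ord0 ord0), (lift ord0 ord0, lift ord0 ord0)).
pose sos := (l0 * l0 + l0 * l1)%:C * (conjc a000 * a000)
   + (l1 * l1 + l0 * l1)%:C * (conjc a110 * a110)
   + (l2 * l2 + l0 * l1)%:C * (conjc a211 * a211)
   + (l0 * l1)%:C * (conjc (a010 + a100) * (a010 + a100))
   + (l0 * l2)%:C * (conjc (a011 + a200) * (a011 + a200))
   + (l0 * (l1 - l2))%:C * (conjc a011 * a011)
   + (l0 * (l1 - l2))%:C * (conjc a200 * a200)
   + (l1 * l2)%:C * (conjc (a111 + a210) * (a111 + a210))
   + (l1 * (l0 - l2))%:C * (conjc a111 * a111)
   + (l1 * (l0 - l2))%:C * (conjc a210 * a210)
   + (l0 * l1)%:C * (conjc a001 * a001)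
   + (l0 * l1)%:C * (conjc a101 * a101)
   + (l0 * l1)%:C * (conjc a201 * a201).
rewrite [leRHS](_ : _ = sos).
  have l1_l2 : 0 <= l1 - l2 by rewrite subr_ge0.
  have l0_l2 : 0 <= l0 - l2 by rewrite subr_ge0 (le_trans l21).
  by rewrite !addr_ge0 ?mulr_real_sqnormc_ge0 ?addr_ge0 ?mulr_ge0.
by rewrite /sos !rmorphD ?rmorphN !rmorphM /=; ring.
Qed.

Lemma qform_ptA_trB_Omega_ge (u : ('I_3 * 'I_2)%type -> C) :
  0 <= qform (ptA (trB (pure Om))) u + (l1 * l2)%:C * sqnorm u.
Proof.
rewrite qform_ptA_trB_pure /sqnorm.
under eq_bigr => b _ do rewrite qform_ptA_pure.
expand_finsums.
rewrite /= !(mulr0, mul0r, addr0, add0r, conjc0) !rmorphM /= !conjcK !simpl_conjc_real.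
set a00 := u (ord0, ord0). set a01 := u (ord0, lift ord0 ord0).
set a10 := u (lift ord0 ord0, ord0). set a11 := u (lift ord0 ord0, lift ord0 ord0).
set a20 := u (lift ord0 (lift ord0 ord0), ord0).
set a21 := u (lift ord0 (lift ord0 ord0), lift ord0 ord0).
pose sos := (l0 * l0 + l1 * l2)%:C * (conjc a00 * a00)
   + (l1 * l1 + l1 * l2)%:C * (conjc a10 * a10)
   + (l2 * l2 + l1 * l2)%:C * (conjc a21 * a21)
   + (l1 * l2)%:C * (conjc (a11 + a20) * (a11 + a20))
   + (l1 * l2)%:C * (conjc a01 * a01).
rewrite [leRHS](_ : _ = sos).
  by rewrite !addr_ge0 ?mulr_real_sqnormc_ge0 ?addr_ge0 ?mulr_ge0.
by rewrite /sos !rmorphD !rmorphM /=; ring.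
Qed.

Lemma eigenvalue_ptA_Omega :
  eigenvalue (mx_of (ptA (pure Om))) (- (l0 * l1)%:C).
Proof.
pose w (x : ('I_3 * ('I_2 * 'I_2))%type) : C :=
  if [&& val x.1 == 0%N, val x.2.1 == 1%N & val x.2.2 == 0%N] then 1
  else if [&& val x.1 == 1%N, val x.2.1 == 0%N & val x.2.2 == 0%N] then -1 else 0.
apply: (@eigenvalue_mx_of _ _ _ _ w (ord0, (lift ord0 ord0, ord0))).
  by rewrite /w /= oner_eq0.
move=> [y1 [y2 y3]]; rewrite /ptA /pure /w.
expand_finsums.
case: y1 => [[|[|[|?]]] ?] //; case: y2 => [[|[|?]] ?] //; case: y3 => [[|[|?]] ?] //=;
  rewrite ?simpl_conjc_real; ring.
Qed.

Lemma eigenvalue_ptA_trC_Omega :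
  eigenvalue (mx_of (ptA (trC (pure Om)))) (- (l0 * l1)%:C).
Proof.
pose w (x : ('I_3 * 'I_2)%type) : C :=
  if (val x.1 == 0%N) && (val x.2 == 1%N) then 1
  else if (val x.1 == 1%N) && (val x.2 == 0%N) then -1 else 0.
apply: (@eigenvalue_mx_of _ _ _ _ w (ord0, lift ord0 ord0)).
  by rewrite /w /= oner_eq0.
move=> [y1 y2]; rewrite /ptA /trC /pure /w.
expand_finsums.
case: y1 => [[|[|[|?]]] ?] //; case: y2 => [[|[|?]] ?] //=;
  rewrite ?simpl_conjc_real; ring.
Qed.

Lemma eigenvalue_ptA_trB_Omega :
  eigenvalue (mx_of (ptA (trB (pure Om)))) (- (l1 * l2)%:C).
Proof.
pose w (x : ('I_3 * 'I_2)%type) : C :=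
  if (val x.1 == 1%N) && (val x.2 == 1%N) then 1
  else if (val x.1 == 2%N) && (val x.2 == 0%N) then -1 else 0.
apply: (@eigenvalue_mx_of _ _ _ _ w (lift ord0 ord0, lift ord0 ord0)).
  by rewrite /w /= oner_eq0.
move=> [y1 y2]; rewrite /ptA /trB /pure /w.
expand_finsums.
case: y1 => [[|[|[|?]]] ?] //; case: y2 => [[|[|?]] ?] //=;
  rewrite ?simpl_conjc_real; ring.
Qed.

Lemma Nhat_Omega : Nhat (pure Om) = l0 * l1.
Proof.
exact: Nhat_eq (mulr_ge0 l0_ge0 l1_ge0) eigenvalue_ptA_Omega qform_ptA_Omega_ge.
Qed.

Lemma Nhat_trC_Omega : Nhat (trC (pure Om)) = l0 * l1.
Proof.
exact: Nhat_eq (mulr_ge0 l0_ge0 l1_ge0) eigenvalue_ptA_trC_Omega qform_ptA_trC_Omega_ge.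
Qed.

Lemma Nhat_trB_Omega : Nhat (trB (pure Om)) = l1 * l2.
Proof.
exact: Nhat_eq (mulr_ge0 l1_ge0 l2_ge0) eigenvalue_ptA_trB_Omega qform_ptA_trB_Omega_ge.
Qed.

End Omega.

Lemma log2_gt0 (R : realType) (x : R) : 1 < x -> 0 < log2 x.
Proof. by move=> x_gt1; rewrite divr_gt0 ?ln_gt0 ?ltr1n. Qed.

Lemma not_monogamous (R : realType) (E : forall TA TB : finType, op R (TA * TB)%type -> R)
    (TA TB TC : finType) (rho : op R (TA * (TB * TC))%type) :
  is_density rho -> E _ _ rho = E _ _ (trC rho) -> E _ _ (trB rho) != 0 ->
  ~ monogamous E.
Proof. by move=> rho_density E_AB E_AC mono; rewrite (mono _ _ _ rho) ?eqxx in E_AC. Qed.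

Theorem mainTheorem5 (R : realType) (l0 l1 l2 : R) :
  l1 <= l0 -> l2 <= l1 -> 0 < l2 -> l0 ^+ 2 + l1 ^+ 2 + l2 ^+ 2 = 1 ->
  let rho := pure (Omega l0 l1 l2) in
  [/\ Nhat_l rho = Nhat_l (trC rho),
      Nhat_l (trC rho) = log2 (1 + l0 * l1),
      Nhat_l (trB rho) = log2 (1 + l1 * l2),
      0 < log2 (1 + l1 * l2)
    & ~ monogamous (@Nhat_l R)].
Proof.
move=> l10 l21 l2_gt0 l_norm rho.
have l2_ge0 := ltW l2_gt0.
have N_ABC := Nhat_Omega l2_ge0 l21 l10.
have N_AB := Nhat_trC_Omega l2_ge0 l21 l10.
have N_AC := Nhat_trB_Omega l2_ge0 l21 l10.
have N_AC_pos : 0 < log2 (1 + l1 * l2).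
  by rewrite log2_gt0 // ltrDl mulr_gt0 // (lt_le_trans l2_gt0).
rewrite /Nhat_l N_ABC N_AB N_AC ![_ + 1]addrC; split=> //.
apply: (not_monogamous (is_density_pure (sqnorm_Omega l_norm))).
  by rewrite /Nhat_l N_ABC N_AB.
by rewrite /Nhat_l N_AC addrC gt_eqF.
Qed.
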